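(* Consider the constrained multivariate linear model described in the context, with $\mathcal{B}=\mathrm{span}(\boldsymbol\beta)$, $\mathcal{U}=\mathrm{span}(\mathbf U)$ and $\mathcal{E}_{\boldsymbol\Sigma}(\mathcal{B})$ the $\boldsymbol\Sigma$-envelope of $\mathcal{B}$. If $\mathcal{B}\subseteq\mathcal{U}\subseteq\mathcal{E}_{\boldsymbol\Sigma}(\mathcal{B})$, then $$\mathrm{avar}(\sqrt{n}\,\mathrm{vec}(\widehat{\boldsymbol\beta}_{\mathrm{cm}}))\le \mathrm{avar}(\sqrt{n}\,\mathrm{vec}(\widehat{\boldsymbol\beta}_{\mathrm{em}}))$$ in the Loewner (positive semi-definite) order, where these asymptotic covariance matrices are $$\mathrm{avar}(\sqrt{n}\,\mathrm{vec}(\widehat{\boldsymbol\beta}_{\mathrm{cm}}))=\boldsymbol\Sigma_{\mathbf X}^{-1}\otimes \mathbf U(\mathbf U^T\boldsymbol\Sigma^{-1}\mathbf U)^{-1}\mathbf U^T,$$ $$\mathrm{avar}(\sqrt{n}\,\mathrm{vec}(\widehat{\boldsymbol\beta}_{\mathrm{em}}))=\boldsymbol\Sigma_{\mathbf X}^{-1}\otimes\boldsymbol\Gamma\boldsymbol\Omega\boldsymbol\Gamma^T+(\boldsymbol\eta^T\otimes\boldsymbol\Gamma_0)\,\mathbf M^{\dagger}(\boldsymbol\Sigma_{\mathbf X})\,(\boldsymbol\eta\otimes\boldsymbol\Gamma_0^T).$$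
   Context: Data: for $i=1,\dots,n$, $\mathbf Y_i=\mathbf U\boldsymbol\alpha_0+\mathbf U\boldsymbol\alpha\mathbf X_i+\boldsymbol\varepsilon_i$, where $\mathbf Y_i\in\mathbb R^r$, the predictors $\mathbf X_i\in\mathbb R^p$ are non-stochastic, $\mathbf U\in\mathbb R^{r\times k}$ is a known matrix of full column rank, $\boldsymbol\alpha_0\in\mathbb R^k$, $\boldsymbol\alpha\in\mathbb R^{k\times p}$, and the $\boldsymbol\varepsilon_i$ are i.i.d. $N(0,\boldsymbol\Sigma)$ with $\boldsymbol\Sigma>0$. Set $\boldsymbol\beta=\mathbf U\boldsymbol\alpha\in\mathbb R^{r\times p}$, $\mathcal B=\mathrm{span}(\boldsymbol\beta)$, $\mathcal U=\mathrm{span}(\mathbf U)$, and let $\boldsymbol\Sigma_{\mathbf X}$ (positive definite) be the limit of the sample covariance matrix of the $\mathbf X_i$. A subspace $\mathcal R\subseteq\mathbb R^r$ reduces the symmetric matrix $\boldsymbol\Sigma$ if $\boldsymbol\Sigma\mathcal R\subseteq\mathcal R$ (equivalently $\boldsymbol\Sigma=\mathbf P_{\mathcal R}\boldsymbol\Sigma\mathbf P_{\mathcal R}+\mathbf Q_{\mathcal R}\boldsymbol\Sigma\mathbf Q_{\mathcal R}$, with $\mathbf P_{\mathcal R}$ the orthogonal projection onto $\mathcal R$ and $\mathbf Q_{\mathcal R}=\mathbf I-\mathbf P_{\mathcal R}$). The $\boldsymbol\Sigma$-envelope $\mathcal E_{\boldsymbol\Sigma}(\mathcal B)$ is the intersection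 of all reducing subspaces of $\boldsymbol\Sigma$ containing $\mathcal B$; let $u$ be its dimension, $\boldsymbol\Gamma\in\mathbb R^{r\times u}$ a semi-orthogonal basis of it, $(\boldsymbol\Gamma,\boldsymbol\Gamma_0)$ an orthogonal matrix, $\boldsymbol\eta=\boldsymbol\Gamma^T\boldsymbol\beta$ (so $\boldsymbol\beta=\boldsymbol\Gamma\boldsymbol\eta$), $\boldsymbol\Omega=\boldsymbol\Gamma^T\boldsymbol\Sigma\boldsymbol\Gamma$, $\boldsymbol\Omega_0=\boldsymbol\Gamma_0^T\boldsymbol\Sigma\boldsymbol\Gamma_0$. For $\mathbf C\in\mathbb R^{p\times p}$, $\mathbf M(\mathbf C)=\boldsymbol\eta\mathbf C\boldsymbol\eta^T\otimes\boldsymbol\Omega_0^{-1}+\boldsymbol\Omega\otimes\boldsymbol\Omega_0^{-1}+\boldsymbol\Omega^{-1}\otimes\boldsymbol\Omega_0-2\mathbf I$, and $\dagger$ denotes the Moore–Penrose inverse. $\widehat{\boldsymbol\beta}_{\mathrm{cm}}$ is the maximum likelihood estimator of $\boldsymbol\beta$ under the constrained model above (with $\mathbf U$ known), and $\widehat{\boldsymbol\beta}_{\mathrm{em}}$ is the maximum likelihood estimator of $\boldsymbol\beta$ under the unconstrained envelope model $\mathbf Y_i=\boldsymbol\beta_0+\boldsymbol\Gamma\boldsymbol\eta\mathbf X_i+\boldsymbol\varepsilon_i$, $\boldsymbol\Sigma=\boldsymbol\Gamma\boldsymbol\Omega\boldsymbol\Gamma^T+\boldsymbol\Gamma_0\boldsymbol\Omega_0\boldsymbol\Gamma_0^T$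 (with $\boldsymbol\Gamma$ unknown, $u$ known, and no use of $\mathbf U$); $\sqrt n\,\mathrm{vec}(\widehat{\boldsymbol\beta}-\boldsymbol\beta)$ is asymptotically normal with mean 0 and the displayed covariance matrices, denoted $\mathrm{avar}(\cdot)$. *)

(* Matrices over an abstract R : realType.
   Kronecker product: mathcomp-real-closed's [tensmx] (notation A *t B),
   the standard Kronecker product (block (i,k) of A *t B is A i k *: B). *)
From HB Require Import structures.
From mathcomp Require Import all_boot all_order all_algebra.
From mathcomp Require Import mxtens.
From mathcomp Require Import reals.
Set Implicit Arguments.
Unset Strict Implicit.
Unset Printing Implicit Defensive.
Import Order.TTheory GRing.Theory Num.Theory.
Local Open Scope ring_scope.

(* Subspaces of R^r are represented (MathComp convention) by the row space
   of a matrix; the column space span(A) of A : 'M_(r,c) is the row space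
   of A^T. *)

Section Defs.
Variable R : realType.

Definition posdef {n} (A : 'M[R]_n) : Prop :=
  A^T = A /\ forall x : 'cV[R]_n, x != 0 -> 0 < (x^T *m A *m x) 0 0.

Definition possemidef {n} (A : 'M[R]_n) : Prop :=
  A^T = A /\ forall x : 'cV[R]_n, 0 <= (x^T *m A *m x) 0 0.

Definition loewner_le {n} (A B : 'M[R]_n) : Prop := possemidef (B - A).

(* the subspace (row space of) S reduces the symmetric matrix Sigma:
   Sigma S ⊆ S (for row vectors v in S, the vector Sigma v is v Sigma^T
   = v Sigma by symmetry) *)
Definition reduces {r} (Sigma S : 'M[R]_r) : Prop := (S *m Sigma <= S)%MS.

Definition is_envelope {r m k} (Sigma : 'M[R]_r) (B : 'M[R]_(m, r))
    (E : 'M[R]_(k, r)) : Prop :=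
  forall v : 'rV[R]_r, (v <= E)%MS <->
    (forall S : 'M[R]_r, reduces Sigma S -> (B <= S)%MS -> (v <= S)%MS).

Definition moore_penrose {m n} (M : 'M[R]_(m, n)) (Md : 'M[R]_(n, m)) : Prop :=
  [/\ M *m Md *m M = M, Md *m M *m Md = Md,
      (M *m Md)^T = M *m Md & (Md *m M)^T = Md *m M].

Definition Mmat {u v p} (eta : 'M[R]_(u, p)) (Omega : 'M[R]_u)
    (Omega0 : 'M[R]_v) (C : 'M[R]_p) : 'M[R]_(u * v) :=
  (eta *m C *m eta^T) *t invmx Omega0 + Omega *t invmx Omega0
  + invmx Omega *t Omega0 - 2%:M.

Definition avar_cm {r k p} (SigmaX : 'M[R]_p) (Sigma : 'M[R]_r)
    (U : 'M[R]_(r, k)) : 'M[R]_(p * r) :=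
  invmx SigmaX *t (U *m invmx (U^T *m invmx Sigma *m U) *m U^T).

Definition avar_em {r u v p} (SigmaX : 'M[R]_p) (Gamma : 'M[R]_(r, u))
    (Gamma0 : 'M[R]_(r, v)) (eta : 'M[R]_(u, p)) (Omega : 'M[R]_u)
    (Md : 'M[R]_(u * v)) : 'M[R]_(p * r) :=
  invmx SigmaX *t (Gamma *m Omega *m Gamma^T)
  + (eta^T *t Gamma0) *m Md *m (eta *t Gamma0^T).

End Defs.

From HB Require Import structures.
From mathcomp Require Import all_boot all_order all_algebra.
From mathcomp Require Import mxtens.
From mathcomp Require Import reals.
From mathcomp.algebra_tactics Require Import ring lra.
Import Order.TTheory GRing.Theory Num.Theory.
Local Open Scope ring_scope.
Set Implicit Arguments.
Unset Strict Implicit.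
Unset Printing Implicit Defensive.

(* With Q = U (U^T Sigma^-1 U)^-1 U^T, the difference avar_em - avar_cm is
   Sigma_X^-1 ⊗ (Gamma Omega Gamma^T - Q) + (eta^T ⊗ Gamma0) M^† (eta ⊗ Gamma0^T),
   and both terms are positive semi-definite.
   Since span U ⊆ span Gamma, the projection P = Gamma Gamma^T fixes Q, and
   Q Sigma^-1 Q = Q, so Gamma Omega Gamma^T - Q = P Sigma P - Q
   = (P - Q Sigma^-1) Sigma (P - Q Sigma^-1)^T.
   With A = Omega ⊗ Omega0^-1, whose inverse is Omega^-1 ⊗ Omega0, one has
   A + A^-1 - 2 I = (A - I) A^-1 (A - I)^T, so M(Sigma_X) is positive
   semi-definite, hence so is M^† = M^† M M^†^T.  Kronecker products of positive
   semi-definite matrices are positive semi-definite because every such matrix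
   is a Gram matrix L L^T, obtained by peeling off one Cholesky column at a
   time. *)

Section PositiveSemidefinite.
Variable R : realType.

Definition qform n (A : 'M[R]_n) (x y : 'cV[R]_n) : R := (x^T *m A *m y) 0 0.

Lemma qform_lin2 n (A : 'M[R]_n) (x y : 'cV[R]_n) a b :
  qform A (a *: x + b *: y) (a *: x + b *: y) =
  a ^+ 2 * qform A x x + a * b * (qform A x y + qform A y x)
  + b ^+ 2 * qform A y y.
Proof.
by rewrite /qform !linearD !linearZ /= !mulmxDl -!scalemxAl !mxE; ring.
Qed.

Lemma qformC n (A : 'M[R]_n) x y : A^T = A -> qform A x y = qform A y x.
Proof.
move=> sA; have -> : qform A x y = (x^T *m A *m y)^T 0 0 by rewrite mxE.
by rewrite !trmx_mul trmxK sA mulmxA.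
Qed.

Lemma qform_delta n (A : 'M[R]_n) i j :
  qform A (delta_mx i 0) (delta_mx j 0) = A i j.
Proof. by rewrite /qform trmx_delta -rowE -colE !mxE. Qed.

Lemma possemidef_gram n m (L : 'M[R]_(n, m)) : possemidef (L *m L^T).
Proof.
split=> [|x]; first by rewrite trmx_mul trmxK.
have -> : x^T *m (L *m L^T) *m x = (L^T *m x)^T *m (L^T *m x).
  by rewrite trmx_mul trmxK !mulmxA.
by rewrite mxE; apply: sumr_ge0 => j _; rewrite !mxE -expr2 sqr_ge0.
Qed.

Lemma possemidef_congr n m (A : 'M[R]_n) (N : 'M[R]_(m, n)) :
  possemidef A -> possemidef (N *m A *m N^T).
Proof.
case=> sA pA; split=> [|x]; first by rewrite !trmx_mul trmxK sA mulmxA.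
by have := pA (N^T *m x); rewrite trmx_mul trmxK !mulmxA.
Qed.

Lemma possemidefD n (A B : 'M[R]_n) :
  possemidef A -> possemidef B -> possemidef (A + B).
Proof.
case=> sA pA [sB pB]; split=> [|x]; first by rewrite linearD /= sA sB.
by rewrite mulmxDr mulmxDl mxE addr_ge0.
Qed.

Lemma posdef_possemidef n (A : 'M[R]_n) : posdef A -> possemidef A.
Proof.
case=> sA pA; split=> // x; have [->|/pA/ltW //] := eqVneq x 0.
by rewrite mulmx0 mxE.
Qed.

Lemma posdef_unitmx n (A : 'M[R]_n) : posdef A -> A \in unitmx.
Proof.
case=> _ pA; rewrite -row_free_unit -kermx_eq0.
apply/rowV0P => w /sub_kermxP wA.
apply/eqP/negPn/negP; rewrite -(inj_eq trmx_inj) trmx0 => /pA.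
by rewrite trmxK wA mul0mx mxE ltxx.
Qed.

Lemma posdef_invmx n (A : 'M[R]_n) : posdef A -> posdef (invmx A).
Proof.
move=> pdA; have uA := posdef_unitmx pdA; case: pdA => sA pA.
split=> [|x nz]; first by rewrite trmx_inv sA.
have xE : x = A *m (invmx A *m x) by rewrite mulmxA mulmxV ?mul1mx.
have -> : x^T *m invmx A *m x = (invmx A *m x)^T *m A *m (invmx A *m x).
  by rewrite {1}xE trmx_mul sA -!mulmxA mulKVmx.
by apply: pA; apply: contraNneq nz => y0; rewrite xE y0 mulmx0.
Qed.

Lemma posdef_congr n m (A : 'M[R]_n) (N : 'M[R]_(n, m)) :
  posdef A -> row_full N -> posdef (N^T *m A *m N).
Proof.
case=> sA pA /row_fullP[B BN]; split=> [|x nz].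
  by rewrite !trmx_mul trmxK sA mulmxA.
have /pA : N *m x != 0.
  by apply: contraNneq nz => Nx0; rewrite -[x]mul1mx -BN -mulmxA Nx0 mulmx0.
by rewrite trmx_mul !mulmxA.
Qed.

Lemma possemidef_diag_ge0 n (A : 'M[R]_n) i : possemidef A -> 0 <= A i i.
Proof. by case=> _ pA; rewrite -qform_delta; apply: pA. Qed.

Lemma possemidef_diag_eq0 n (A : 'M[R]_n) i j :
  possemidef A -> A i i = 0 -> A i j = 0.
Proof.
move=> psdA Aii0; have [sA pA] := psdA.
have Aji : A j i = A i j by rewrite -{1}sA mxE.
have Ajj := possemidef_diag_ge0 j psdA.
have := pA ((A j j + 1) *: delta_mx i 0 + (- A i j) *: delta_mx j 0).
rewrite -/(qform _ _ _) qform_lin2 !qform_delta Aii0 Aji; nra.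
Qed.

Lemma possemidef_eq0 n (A : 'M[R]_n) :
  possemidef A -> (forall i, A i i = 0) -> A = 0.
Proof.
move=> psdA A0; apply/matrixP => i j.
by rewrite mxE (possemidef_diag_eq0 j psdA).
Qed.

Definition cholesky_col n (A : 'M[R]_n) i : 'cV[R]_n :=
  (Num.sqrt (A i i))^-1 *: col i A.

Lemma sub_cholesky_colE n (A : 'M[R]_n) i j k : 0 < A i i ->
  (A - cholesky_col A i *m (cholesky_col A i)^T) j k
    = A j k - A j i * A k i / A i i.
Proof.
move=> Aii; rewrite !mxE big_ord1 !mxE -[A i i in RHS]sqr_sqrtr ?ltW //.
by field; rewrite gt_eqF ?sqrtr_gt0.
Qed.

Lemma possemidef_sub_cholesky_col n (A : 'M[R]_n) i :
  possemidef A -> 0 < A i i ->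
  possemidef (A - cholesky_col A i *m (cholesky_col A i)^T).
Proof.
move=> [sA pA] Aii; set c := cholesky_col A i.
split=> [|x]; first by rewrite linearB /= trmx_mul trmxK sA.
set a := A i i; set s := Num.sqrt a; set t := qform A x (delta_mx i 0).
have s0 : s != 0 by rewrite gt_eqF ?sqrtr_gt0.
have xc : (x^T *m c) 0 0 = s^-1 * t by rewrite -scalemxAr mxE colE mulmxA.
have cx : c^T *m x = x^T *m c.
  rewrite -[x^T *m c]trmxK trmx_mul trmxK.
  by apply/matrixP => k l; rewrite !ord1 [RHS]mxE.
have -> : (x^T *m (A - c *m c^T) *m x) 0 0 = qform A x x - t ^+ 2 / a.
  rewrite mulmxBr mulmxBl (mulmxA x^T c) -(mulmxA (x^T *m c)) cx [LHS]mxE.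
  rewrite [X in _ + X]mxE [X in - X]mxE big_ord1 xc.
  by rewrite -[a]sqr_sqrtr ?ltW // -/s; congr (_ - _); field.
have := pA (1 *: x + (- (t / a)) *: delta_mx i 0).
rewrite -/(qform _ _ _) qform_lin2 (qformC (delta_mx i 0) x sA) -/t.
rewrite qform_delta -/a.
suff -> : 1 ^+ 2 * qform A x x + 1 * - (t / a) * (t + t) + (- (t / a)) ^+ 2 * a
          = qform A x x - t ^+ 2 / a by [].
by field; rewrite gt_eqF.
Qed.

Lemma diag_support_sub_cholesky_col n (A : 'M[R]_n) i :
  possemidef A -> 0 < A i i ->
  [set j | (A - cholesky_col A i *m (cholesky_col A i)^T) j j != 0]
    \subset [set j | A j j != 0] :\ i.
Proof.
move=> psdA Aii; apply/subsetP => j.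
rewrite !inE sub_cholesky_colE // => nz; apply/andP; split.
  by apply: contraNneq nz => ->; rewrite mulfK ?subrr // lt0r_neq0.
apply: contraNneq nz => Ajj0.
by rewrite Ajj0 (possemidef_diag_eq0 i psdA Ajj0) !mul0r subrr.
Qed.

Lemma possemidef_gram_factor n (A : 'M[R]_n) :
  possemidef A -> exists m (L : 'M[R]_(n, m)), A = L *m L^T.
Proof.
move: {2}#|_| (leqnn #|[set j | A j j != 0]|) => N.
elim: N A => [|N IH] A cardA psdA.
  exists 0%N, 0; rewrite mul0mx; apply: possemidef_eq0 => // j.
  move: cardA; rewrite leqn0 cards_eq0 => /eqP/setP/(_ j).
  by rewrite !inE => /negbFE/eqP.
have [D0|[i]] := set_0Vmem [set j | A j j != 0].
  by apply: IH => //; rewrite D0 cards0.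
rewrite inE => Ai0.
have Aii : 0 < A i i by rewrite lt_def Ai0 possemidef_diag_ge0.
set c := cholesky_col A i.
have [|m [L LE]] := IH _ _ (possemidef_sub_cholesky_col psdA Aii).
  apply: leq_trans (subset_leq_card (diag_support_sub_cholesky_col psdA Aii)) _.
  by move: cardA; rewrite (cardsD1 i) inE Ai0 add1n ltnS.
by exists (m + 1)%N, (row_mx L c); rewrite tr_row_mx mul_row_col -LE subrK.
Qed.

Lemma tensmxBr m n p q (A : 'M[R]_(m, n)) (B C : 'M[R]_(p, q)) :
  A *t (B - C) = A *t B - A *t C.
Proof. by apply/matrixP => i j; rewrite !mxE mulrBr. Qed.

Lemma tensmx11 m n : (1%:M : 'M[R]_m) *t (1%:M : 'M[R]_n) = 1%:M.
Proof.
apply/matrixP => i j.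
case: (mxtens_indexP i) => i1 i2; case: (mxtens_indexP j) => j1 j2.
rewrite tensmxE !mxE (inj_eq (can_inj (@mxtens_indexK m n))) xpair_eqE.
by rewrite -natrM mulnb.
Qed.

Lemma possemidef_tens m n (A : 'M[R]_m) (B : 'M[R]_n) :
  possemidef A -> possemidef B -> possemidef (A *t B).
Proof.
move=> /possemidef_gram_factor[a [L ->]] /possemidef_gram_factor[b [K ->]].
by rewrite -tensmx_mul -trmx_tens; apply: possemidef_gram.
Qed.

Lemma moore_penrose_unique m n (M : 'M[R]_(m, n)) X Y :
  moore_penrose M X -> moore_penrose M Y -> X = Y.
Proof.
case=> X1 X2 X3 X4 [Y1 Y2 Y3 Y4].
have XM : X *m M = Y *m M.
  have -> : X *m M = X *m M *m (Y *m M) by rewrite !mulmxA -{1}Y1 ?mulmxA.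
  by rewrite -X4 -Y4 -trmx_mul !mulmxA -!mulmxA (mulmxA M) X1.
have MX : M *m X = M *m Y.
  have -> : M *m X = M *m Y *m (M *m X) by rewrite !mulmxA -{1}Y1 ?mulmxA.
  by rewrite -X3 -Y3 -trmx_mul !mulmxA X1.
by rewrite -X2 XM -mulmxA MX mulmxA Y2.
Qed.

Lemma moore_penrose_tr m n (M : 'M[R]_(m, n)) Md :
  moore_penrose M Md -> moore_penrose M^T Md^T.
Proof.
case=> h1 h2 h3 h4; split; rewrite -!trmx_mul ?trmxK.
- by rewrite mulmxA h1.
- by rewrite mulmxA h2.
- by rewrite h4.
- by rewrite h3.
Qed.

Lemma possemidef_moore_penrose n (M Md : 'M[R]_n) :
  possemidef M -> moore_penrose M Md -> possemidef Md.
Proof.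
move=> psdM mp; have sMd : Md^T = Md.
  apply: (moore_penrose_unique _ mp).
  by rewrite -{1}psdM.1; apply: moore_penrose_tr.
by case: mp => _ <- _ _; rewrite -{2}sMd; apply: possemidef_congr.
Qed.

Lemma possemidef_add_inv_sub2 n (P Q : 'M[R]_n) :
  P^T = P -> P *m Q = 1%:M -> possemidef Q -> possemidef (P + Q - 2%:M).
Proof.
move=> sP PQ psdQ; have QP := mulmx1C PQ.
have -> : P + Q - 2%:M = (P - 1%:M) *m Q *m (P - 1%:M)^T.
  rewrite linearB /= sP trmx1 !mulmxBl !mulmxBr !mulmx1 !mul1mx PQ mul1mx QP.
  have -> : 2%:M = 1%:M + 1%:M :> 'M[R]_n by rewrite -raddfD.
  rewrite opprB opprD !addrA.
  by congr (_ + _); rewrite addrAC.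
exact: possemidef_congr.
Qed.

Lemma possemidef_Mmat u v p (eta : 'M[R]_(u, p)) (Omega : 'M[R]_u)
    (Omega0 : 'M[R]_v) (C : 'M[R]_p) :
  posdef Omega -> posdef Omega0 -> possemidef C ->
  possemidef (Mmat eta Omega Omega0 C).
Proof.
move=> pdO pdO0 psdC; rewrite /Mmat -!addrA; apply: possemidefD.
  apply: possemidef_tens; first exact: possemidef_congr.
  exact/posdef_possemidef/posdef_invmx.
rewrite !addrA; apply: possemidef_add_inv_sub2.
- by rewrite trmx_tens trmx_inv pdO.1 pdO0.1.
- by rewrite tensmx_mul mulmxV ?mulVmx ?posdef_unitmx // tensmx11.
- apply: possemidef_tens; last exact: posdef_possemidef.
  exact/posdef_possemidef/posdef_invmx.
Qed.

Lemma loewner_gls_cov_le_envelope_cov r k u (Sigma : 'M[R]_r)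
    (U : 'M[R]_(r, k)) (Gamma : 'M[R]_(r, u)) :
  posdef Sigma -> \rank U = k -> Gamma^T *m Gamma = 1%:M ->
  (U^T <= Gamma^T)%MS ->
  loewner_le (U *m invmx (U^T *m invmx Sigma *m U) *m U^T)
             (Gamma *m (Gamma^T *m Sigma *m Gamma) *m Gamma^T).
Proof.
move=> pdS rkU GG /submxP[D UD].
have uS := posdef_unitmx pdS.
set Si := invmx Sigma; have sSi : Si^T = Si := (posdef_invmx pdS).1.
set W := U^T *m Si *m U.
have pdW : posdef W.
  by apply: posdef_congr; [apply: posdef_invmx | rewrite /row_full rkU].
set Q := U *m invmx W *m U^T; set P := Gamma *m Gamma^T.
have sQ : Q^T = Q by rewrite /Q !trmx_mul trmxK trmx_inv pdW.1 mulmxA.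
have sP : P^T = P by rewrite /P trmx_mul trmxK.
have PU : P *m U = U.
  by rewrite -[U]trmxK UD trmx_mul trmxK /P -mulmxA (mulmxA _ Gamma) GG mul1mx.
have PQ : P *m Q = Q by rewrite /Q !mulmxA PU.
have QP : Q *m P = Q by rewrite -[LHS]trmxK trmx_mul sP sQ PQ sQ.
have QSiQ : Q *m Si *m Q = Q.
  rewrite /Q !mulmxA -(mulmxA _ U^T) -(mulmxA _ (U^T *m Si)) -/W.
  by rewrite mulmxKV ?posdef_unitmx.
rewrite /loewner_le.
have -> : Gamma *m (Gamma^T *m Sigma *m Gamma) *m Gamma^T - Q
          = (P - Q *m Si) *m Sigma *m (P - Q *m Si)^T.
  rewrite linearB /= sP trmx_mul sQ sSi !mulmxBl !mulmxBr.
  rewrite -(mulmxA Q Si) mulVmx // mulmx1 QP.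
  rewrite (mulmxA (P *m Sigma) Si) -(mulmxA P Sigma Si) mulmxV // mulmx1 PQ.
  by rewrite (mulmxA Q) QSiQ subrr subr0 /P !mulmxA.
by apply: possemidef_congr; apply: posdef_possemidef.
Qed.

End PositiveSemidefinite.

Theorem proposition1 (R : realType) (r k p u v : nat)
    (Sigma : 'M[R]_r) (SigmaX : 'M[R]_p)
    (U : 'M[R]_(r, k)) (alpha : 'M[R]_(k, p))
    (Gamma : 'M[R]_(r, u)) (Gamma0 : 'M[R]_(r, v))
    (Md : 'M[R]_(u * v)) :
  posdef Sigma -> posdef SigmaX ->
  \rank U = k ->
  (* (Gamma, Gamma0) is an orthogonal matrix *)
  Gamma^T *m Gamma = 1%:M -> Gamma0^T *m Gamma0 = 1%:M ->
  Gamma^T *m Gamma0 = 0 ->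
  Gamma *m Gamma^T + Gamma0 *m Gamma0^T = 1%:M ->
  (* span(Gamma) is the Sigma-envelope of B = span(beta), beta = U alpha *)
  is_envelope Sigma (U *m alpha)^T Gamma^T ->
  (* B ⊆ U ⊆ E_Sigma(B) *)
  ((U *m alpha)^T <= U^T)%MS -> (U^T <= Gamma^T)%MS ->
  let beta := U *m alpha in
  let eta := Gamma^T *m beta in
  let Omega := Gamma^T *m Sigma *m Gamma in
  let Omega0 := Gamma0^T *m Sigma *m Gamma0 in
  moore_penrose (Mmat eta Omega Omega0 SigmaX) Md ->
  loewner_le (avar_cm SigmaX Sigma U)
             (avar_em SigmaX Gamma Gamma0 eta Omega Md).
Proof.
move=> pdS pdSX rkU GG G0G0 _ _ _ _ UG beta eta Omega Omega0 mp.
have row_full_semiorth w (G : 'M[R]_(r, w)) : G^T *m G = 1%:M -> row_full G.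
  by move=> GtG; apply/row_fullP; exists G^T.
rewrite /loewner_le /avar_em /avar_cm addrAC -tensmxBr; apply: possemidefD.
  apply: possemidef_tens; first exact/posdef_possemidef/posdef_invmx.
  exact: loewner_gls_cov_le_envelope_cov.
rewrite -[eta *t Gamma0^T]trmxK trmx_tens trmxK; apply: possemidef_congr.
apply: possemidef_moore_penrose mp.
apply: possemidef_Mmat; last exact: posdef_possemidef.
  exact: posdef_congr (row_full_semiorth _ _ GG).
exact: posdef_congr (row_full_semiorth _ _ G0G0).
Qed.
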